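(* There is a $32$-point code in $\mathrm{SO}(4)$ which is a subgroup of $\mathrm{SO}(4)$, is universally optimal, and whose points form the vertices of a regular cross polytope in the sphere $\{X\in\mathbb{R}^{4\times 4}: \|X\|_F=2\}\cong S^{15}$ (i.e., the $32$ points consist of $16$ antipodal pairs, and any two points not antipodal to each other are orthogonal with respect to the Frobenius inner product).
   Context: $\mathrm{SO}(n)$ carries the chordal distance $d_c(U_1,U_2)=\|U_1-U_2\|_F$, from the embedding $\mathrm{SO}(n)\subset\mathbb{R}^{n\times n}$; every element of $\mathrm{SO}(4)$ has Frobenius norm $2$. A code is a finite subset. A function $g:(0,\infty)\to\mathbb{R}$ is completely monotonic if it is smooth and $(-1)^kg^{(k)}\ge0$ for all $k\ge 0$. A code $\mathcal{C}\subset\mathrm{SO}(n)$ is universally optimal if for every completely monotonic $g$ it minimizes $\sum_{x\ne y\in\mathcal{C}} g(d_c(x,y)^2)$ among all codes in $\mathrm{SO}(n)$ of the same size. *)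

From HB Require Import structures.
From mathcomp Require Import all_boot all_order all_algebra.
From mathcomp Require Import all_classical all_reals all_analysis.
Set Implicit Arguments. Unset Strict Implicit. Unset Printing Implicit Defensive.
Import Order.TTheory GRing.Theory Num.Theory.
Local Open Scope ring_scope.

Definition frob_dot (R : realType) (n : nat) (A B : 'M[R]_n) : R :=
  \sum_(i < n) \sum_(j < n) A i j * B i j.

Definition chordal_sq (R : realType) (n : nat) (U1 U2 : 'M[R]_n) : R :=
  frob_dot (U1 - U2) (U1 - U2).

Definition in_SO (R : realType) (n : nat) (U : 'M[R]_n) : Prop :=
  U^T *m U = 1%:M /\ \det U = 1.

Definition completely_monotonic (R : realType) (g : R -> R) : Prop :=
  forall (k : nat) (x : R), 0 < x ->
    derivable (derive1n k g) x 1 /\ 0 <= (-1) ^+ k * derive1n k g x.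

Definition energy (R : realType) (n : nat) (g : R -> R) (C : seq 'M[R]_n) : R :=
  \sum_(x <- C) \sum_(y <- C | y != x) g (chordal_sq x y).

Definition is_code (R : realType) (n : nat) (C : seq 'M[R]_n) : Prop :=
  uniq C /\ (forall U, U \in C -> in_SO U).

Definition universally_optimal (R : realType) (n : nat) (C : seq 'M[R]_n) : Prop :=
  forall g : R -> R, completely_monotonic g ->
  forall C' : seq 'M[R]_n, is_code C' -> size C' = size C ->
    energy g C <= energy g C'.

Definition is_subgroup (R : realType) (n : nat) (C : seq 'M[R]_n) : Prop :=
  (1%:M \in C) /\ (forall x y, x \in C -> y \in C -> x *m y \in C)
  /\ (forall x, x \in C -> invmx x \in C).

Definition cross_polytope (R : realType) (n : nat) (C : seq 'M[R]_n) : Prop :=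
  (forall x, x \in C -> - x \in C) /\
  (forall x y, x \in C -> y \in C -> y != x -> y != - x -> frob_dot x y = 0).

(* The code is the group of the 32 maps [x |-> +-e_a x e_b] of the quaternions,
   [e_a, e_b] in [{1, i, j, k}]: each is orthogonal of determinant 1, and two of
   them are Frobenius-orthogonal unless they are equal or opposite, so they are
   the vertices of a cross polytope on the sphere of radius 2 in [R^16].

   Universal optimality is a linear programming bound.  For completely
   monotonic [g], the Hermite interpolant of [g] at the squared distances 8
   (double node) and 16 lies below [g] on (0, 16] because [g''' <= 0]; in the
   inner product [t = <x, y>] (squared distance [8 - 2 t]) it reads
   [a + b t + c t^2] with [b, c >= 0].  For any 32 points of norm 2 in [R^16],
   [sum <x, y> = |sum x|^2 >= 0] and [sum <x, y>^2 >= (sum |x|^2)^2 / 16], which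
   bounds the energy from below; the cross polytope attains the bound since its
   inner products are 0 and -4, exactly at the interpolation nodes. *)

From HB Require Import structures.
From mathcomp Require Import all_boot all_order all_algebra.
From mathcomp Require Import all_classical all_reals all_analysis.
From mathcomp Require Import ring lra.
Set Implicit Arguments. Unset Strict Implicit. Unset Printing Implicit Defensive.
Import Order.TTheory GRing.Theory Num.Theory.
Local Open Scope ring_scope.

Section Frobenius.
Context {R : realType} (n : nat).
Implicit Types (A B U : 'M[R]_n).

Lemma frob_dotE A B : frob_dot A B = \sum_(k : 'I_n * 'I_n) A k.1 k.2 * B k.1 k.2.
Proof. by rewrite /frob_dot pair_bigA. Qed.

Lemma frob_dotZ a b A B : frob_dot (a *: A) (b *: B) = a * b * frob_dot A B.
Proof.
by rewrite !frob_dotE mulr_sumr; apply: eq_bigr => k _; rewrite !mxE; ring.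
Qed.

Lemma frob_dotNr A B : frob_dot A (- B) = - frob_dot A B.
Proof. by rewrite !frob_dotE -sumrN; apply: eq_bigr => k _; rewrite mxE mulrN. Qed.

Lemma frob_dot_ge0 A : 0 <= frob_dot A A.
Proof. by rewrite frob_dotE; apply: sumr_ge0 => k _; rewrite -expr2 sqr_ge0. Qed.

Lemma frob_dot_gt0 A : A != 0 -> 0 < frob_dot A A.
Proof.
move=> A_neq0; have /existsP [k Ak] : [exists k : 'I_n * 'I_n, A k.1 k.2 != 0].
  apply: contraR A_neq0 => /existsPn A0; apply/eqP/matrixP => i j.
  by have := A0 (i, j); rewrite negbK mxE => /eqP.
rewrite frob_dotE (bigD1 k) //= ltr_pwDl //.
  by rewrite -expr2 lt_def sqr_ge0 expf_neq0.
by apply: sumr_ge0 => l _; rewrite -expr2 sqr_ge0.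
Qed.

Lemma chordal_sqE A B :
  chordal_sq A B = frob_dot A A + frob_dot B B - 2 * frob_dot A B.
Proof.
rewrite /chordal_sq !frob_dotE mulr_sumr -big_split -sumrB /=.
by apply: eq_bigr => k _; rewrite !mxE; ring.
Qed.

Lemma chordal_sq_parallelogram A B :
  chordal_sq A B + frob_dot (A + B) (A + B) = 2 * (frob_dot A A + frob_dot B B).
Proof.
rewrite /chordal_sq !frob_dotE -!big_split mulr_sumr /=.
by apply: eq_bigr => k _; rewrite !mxE; ring.
Qed.

Lemma chordal_sq_le A B c : frob_dot A A = c -> frob_dot B B = c ->
  chordal_sq A B <= 4 * c.
Proof.
move=> AA BB; have := chordal_sq_parallelogram A B; have := frob_dot_ge0 (A + B).
by rewrite AA BB; lra.
Qed.

Lemma frob_dot_orthogonal U : U^T *m U = 1%:M -> frob_dot U U = n%:R.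
Proof.
move=> /(congr1 mxtrace); rewrite mxtrace1 => <-.
rewrite /frob_dot /mxtrace exchange_big; apply: eq_bigr => j _; rewrite !mxE.
by apply: eq_bigr => i _; rewrite !mxE.
Qed.

Lemma frob_dot_SO U : in_SO U -> frob_dot U U = n%:R.
Proof. by case=> UTU _; apply: frob_dot_orthogonal. Qed.

Lemma invmx_orthogonal U : U^T *m U = 1%:M -> invmx U = U^T.
Proof.
move=> UTU; have [_ Uu] := mulmx1_unit UTU.
by rewrite -[RHS]mulmx1 -(mulmxV Uu) mulmxA UTU mul1mx.
Qed.

Lemma orthogonal_det1_of_sqr U B c : U^T *m U = 1%:M -> 0 < c ->
  B *m B = c *: U -> \det U = 1.
Proof.
move=> UTU c_gt0 BBE.
have det_ge0 : 0 <= \det U.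
  have : 0 <= c ^+ n * \det U by rewrite -detZ -BBE det_mulmx -expr2 sqr_ge0.
  by rewrite pmulr_rge0 // exprn_gt0.
have : \det U ^+ 2 = 1 by rewrite expr2 -{1}det_tr -det_mulmx UTU det1.
move/eqP; rewrite sqrf_eq1 => /orP[/eqP //|/eqP detN].
by move: det_ge0; rewrite detN; lra.
Qed.

End Frobenius.

Lemma sqr_sum_le_card (R : realType) (I : finType) (w : I -> R) :
  (\sum_i w i) ^+ 2 <= #|I|%:R * \sum_i w i ^+ 2.
Proof.
have : 0 <= \sum_i \sum_j (w i - w j) ^+ 2.
  by apply: sumr_ge0 => i _; apply: sumr_ge0 => j _; apply: sqr_ge0.
have -> : \sum_i \sum_j (w i - w j) ^+ 2 =
    \sum_i \sum_(j : I) w i ^+ 2 + \sum_(i : I) \sum_j w j ^+ 2 - 2 * \sum_i \sum_j w i * w j.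
  rewrite mulr_sumr -big_split /= -sumrB; apply: eq_bigr => i _.
  by rewrite mulr_sumr -big_split /= -sumrB; apply: eq_bigr => j _; ring.
have row_const : \sum_i \sum_(j : I) w i ^+ 2 = #|I|%:R * \sum_i w i ^+ 2.
  by rewrite mulr_sumr; apply: eq_bigr => i _; rewrite sumr_const mulr_natl.
have col_const : \sum_(i : I) \sum_j w j ^+ 2 = #|I|%:R * \sum_i w i ^+ 2.
  by rewrite sumr_const mulr_natl.
have cross : \sum_i \sum_j w i * w j = (\sum_i w i) ^+ 2 by rewrite expr2 big_distrlr.
rewrite row_const col_const cross; lra.
Qed.

Lemma big_distinct_pairs (R : realType) (T : eqType) (C : seq T) (F : T -> T -> R) :
  uniq C -> \sum_(x <- C) \sum_(y <- C | y != x) F x y =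
            \sum_(x <- C) \sum_(y <- C) F x y - \sum_(x <- C) F x x.
Proof.
move=> C_uniq; rewrite -sumrB big_seq [RHS]big_seq; apply: eq_bigr => x xC.
by rewrite (bigD1_seq x) //= addrC addrK.
Qed.

Section GramSums.
Context {R : realType} (n : nat) (C : seq 'M[R]_n).

Lemma gram_sum_ge0 : 0 <= \sum_(x <- C) \sum_(y <- C) frob_dot x y.
Proof.
have -> : \sum_(x <- C) \sum_(y <- C) frob_dot x y =
          frob_dot (\sum_(x <- C) x) (\sum_(x <- C) x).
  rewrite frob_dotE; under [RHS]eq_bigr do rewrite !summxE big_distrlr /=.
  rewrite [RHS]exchange_big; apply: eq_bigr => x _.
  by rewrite [RHS]exchange_big; apply: eq_bigr => y _; rewrite frob_dotE.
exact: frob_dot_ge0.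
Qed.

(* With [M k l = sum_x x_k x_l], the left side is [(tr M)^2] and the double
   sum on the right is [|M|^2]: Cauchy-Schwarz on the diagonal of [M]. *)
Lemma gram_sqr_sum_ge :
  (\sum_(x <- C) frob_dot x x) ^+ 2 <=
  (n ^ 2)%:R * \sum_(x <- C) \sum_(y <- C) frob_dot x y ^+ 2.
Proof.
pose W (k : 'I_n * 'I_n) := \sum_(x <- C) x k.1 k.2 * x k.1 k.2.
have diagE : \sum_(x <- C) frob_dot x x = \sum_k W k.
  by rewrite [RHS]exchange_big; apply: eq_bigr => x _; rewrite frob_dotE.
have gramE : \sum_(x <- C) \sum_(y <- C) frob_dot x y ^+ 2 =
    \sum_k \sum_l (\sum_(x <- C) x k.1 k.2 * x l.1 l.2) ^+ 2.
  under [RHS]eq_bigr => k _ do under eq_bigr => l _ do rewrite expr2 big_distrlr /=.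
  under [RHS]eq_bigr => k _ do rewrite exchange_big.
  under [RHS]eq_bigr => k _ do under eq_bigr => x _ do rewrite exchange_big.
  rewrite [RHS]exchange_big; apply: eq_bigr => x _.
  rewrite [RHS]exchange_big; apply: eq_bigr => y _.
  rewrite frob_dotE expr2 big_distrlr; apply: eq_bigr => k _; apply: eq_bigr => l _ /=.
  ring.
have cardE : #|{: 'I_n * 'I_n}| = (n ^ 2)%N by rewrite card_prod card_ord mulnn.
rewrite diagE gramE -cardE; apply: le_trans (sqr_sum_le_card W) _.
rewrite ler_wpM2l // ler_sum // => k _.
by rewrite (bigD1 k) //= lerDl; apply: sumr_ge0 => l _; apply: sqr_ge0.
Qed.
End GramSums.

Section Calculus.
Context {R : realType}.
Implicit Types (f df : R -> R) (a b c x : R).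

Lemma is_derive_quadratic (c0 c1 c2 x : R) :
  is_derive x 1 (fun d => c0 + c1 * d + c2 * (d * d)) (c1 + c2 * (x + x)).
Proof.
have id_x : is_derive x 1 (@id R) 1 := is_derive_id x 1.
have := is_deriveD (is_deriveD (is_derive_cst c0 x 1) (is_deriveZ c1 id_x))
                   (is_deriveZ c2 (is_deriveM id_x id_x)).
set q := (X in is_derive _ _ X _) => q_deriv.
have -> : (fun d => c0 + c1 * d + c2 * (d * d)) = q by apply/funext.
by apply: is_derive_eq q_deriv _; rewrite /GRing.scale /= !mulr1 add0r.
Qed.

Lemma le_is_derive_ge0 f df a b : a <= b ->
  (forall x, a <= x <= b -> is_derive x 1 f (df x)) ->
  (forall x, a <= x <= b -> 0 <= df x) -> f a <= f b.
Proof.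
move=> ab f_df df_ge0.
have f_der : {in `[a, b]%R, forall x, derivable f x 1}.
  by move=> x; rewrite in_itv => /f_df [].
have f_cont := derivable_within_continuous f_der.
have f_df_open x : x \in `]a, b[%R -> is_derive x 1 f (df x).
  by rewrite in_itv => /andP[? ?]; apply: f_df; rewrite !ltW.
have [c] := MVT_segment ab f_df_open f_cont.
by rewrite in_itv => /df_ge0 ? fE; rewrite -subr_ge0 fE mulr_ge0 // subr_ge0.
Qed.

Lemma ge_is_derive_le0 f df a b : a <= b ->
  (forall x, a <= x <= b -> is_derive x 1 f (df x)) ->
  (forall x, a <= x <= b -> df x <= 0) -> f b <= f a.
Proof.
move=> ab f_df df_le0; rewrite -lerN2.
apply: (@le_is_derive_ge0 (fun x => - f x) (fun x => - df x)) => // x ?.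
  exact/is_deriveN/f_df.
by rewrite oppr_ge0 df_le0.
Qed.

Lemma rolle_is_derive f df a b : a < b ->
  (forall x, a <= x <= b -> is_derive x 1 f (df x)) -> f a = f b ->
  exists2 c, a < c < b & df c = 0.
Proof.
move=> ab f_df fab.
have f_der : {in `[a, b]%R, forall x, derivable f x 1}.
  by move=> x; rewrite in_itv => /f_df [].
have f_cont := derivable_within_continuous f_der.
have f_der_open x : x \in `]a, b[%R -> derivable f x 1.
  by rewrite in_itv => /andP[? ?]; case: (f_df x); rewrite ?ltW.
have [c] := Rolle ab f_der_open f_cont fab.
rewrite in_itv /= => /andP[ac cb] f'c; exists c; first by rewrite ac.
have f_df_c : is_derive c 1 f (df c) by apply: f_df; rewrite !ltW.
by rewrite -(@derive_val _ _ _ _ _ _ _ f_df_c) (@derive_val _ _ _ _ _ _ _ f'c).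
Qed.

Lemma is_derive_le0_root_sign f df c : 0 < c ->
  (forall x, 0 < x -> is_derive x 1 f (df x)) -> (forall x, 0 < x -> df x <= 0) ->
  f c = 0 -> (forall x, 0 < x <= c -> 0 <= f x) /\ (forall x, c <= x -> f x <= 0).
Proof.
move=> c_gt0 f_df df_le0 fc; split=> [x /andP[x_gt0 xc]|x cx]; rewrite -fc.
  by apply: (ge_is_derive_le0 xc) => y /andP[? ?]; [apply: f_df|apply: df_le0]; lra.
by apply: (ge_is_derive_le0 cx) => y /andP[? ?]; [apply: f_df|apply: df_le0]; lra.
Qed.

(* [G0] vanishes to second order at [a] and to first order at [b]; since
   [G0''' <= 0], [G0] keeps the sign of [(d - a)^2 (b - d)], as in the
   remainder formula of Hermite interpolation. *)
Lemma hermite_remainder_ge0 (G0 G1 G2 G3 : R -> R) a b : 0 < a < b ->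
  (forall x, 0 < x -> is_derive x 1 G0 (G1 x)) ->
  (forall x, 0 < x -> is_derive x 1 G1 (G2 x)) ->
  (forall x, 0 < x -> is_derive x 1 G2 (G3 x)) ->
  (forall x, 0 < x -> G3 x <= 0) ->
  G0 a = 0 -> G1 a = 0 -> G0 b = 0 ->
  forall d, 0 < d <= b -> 0 <= G0 d.
Proof.
move=> /andP[a_gt0 ab] dG0 dG1 dG2 G3_le0 G0a G1a G0b.
have [xi /andP[axi xib] G1xi] : exists2 xi, a < xi < b & G1 xi = 0.
  apply: (@rolle_is_derive G0 G1 _ _ ab) => [x /andP[? ?]|]; last by rewrite G0a G0b.
  by apply: dG0; lra.
have [eta /andP[aeta etaxi] G2eta] : exists2 eta, a < eta < xi & G2 eta = 0.
  apply: (@rolle_is_derive G1 G2 _ _ axi) => [x /andP[? ?]|]; last by rewrite G1a G1xi.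
  by apply: dG1; lra.
have [G2_ge0 G2_le0] := is_derive_le0_root_sign (lt_trans a_gt0 aeta) dG2 G3_le0 G2eta.
have G1_le0_left x : 0 < x <= a -> G1 x <= 0.
  move=> /andP[? ?]; rewrite -G1a.
  by apply: (@le_is_derive_ge0 G1 G2) => // y /andP[? ?]; [apply: dG1|apply: G2_ge0]; lra.
have G1_ge0 x : a <= x <= xi -> 0 <= G1 x.
  move=> /andP[? ?]; have [xeta|etax] := lerP x eta.
    by rewrite -G1a; apply: (@le_is_derive_ge0 G1 G2) => // y /andP[? ?];
      [apply: dG1|apply: G2_ge0]; lra.
  by rewrite -G1xi; apply: (@ge_is_derive_le0 G1 G2) => // y /andP[? ?];
    [apply: dG1|apply: G2_le0]; lra.
have G1_le0_right x : xi <= x -> G1 x <= 0.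
  move=> ?; rewrite -G1xi.
  by apply: (@ge_is_derive_le0 G1 G2) => // y /andP[? ?]; [apply: dG1|apply: G2_le0]; lra.
move=> d /andP[d_gt0 db]; have [da|ad] := lerP d a.
  by rewrite -G0a; apply: (@ge_is_derive_le0 G0 G1) => // y /andP[? ?];
    [apply: dG0|apply: G1_le0_left]; lra.
have [dxi|xid] := lerP d xi.
  by rewrite -G0a; apply: (@le_is_derive_ge0 G0 G1); rewrite ?ltW // => y /andP[? ?];
    [apply: dG0|apply: G1_ge0]; lra.
by rewrite -G0b; apply: (@ge_is_derive_le0 G0 G1) => // y /andP[? ?];
  [apply: dG0|apply: G1_le0_right]; lra.
Qed.

End Calculus.

Section CompletelyMonotonic.
Context {R : realType} (g : R -> R).
Hypothesis g_cm : completely_monotonic g.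

Lemma cm_is_derive k (x : R) : 0 < x ->
  is_derive x 1 (derive1n k g) (derive1n k.+1 g x).
Proof.
move=> x_gt0; have [g_der _] := g_cm k x_gt0.
by apply: is_derive_eq (derivableP g_der) _; rewrite -derive1E.
Qed.

Lemma cm_derive1_le0 (x : R) : 0 < x -> derive1n 1 g x <= 0.
Proof. by move=> x_gt0; have [_] := g_cm 1 x_gt0; rewrite expr1 mulN1r oppr_ge0. Qed.

Lemma cm_tangent_le (a b : R) : 0 < a <= b ->
  g a + (b - a) * derive1n 1 g a <= g b.
Proof.
move=> /andP[a_gt0 ab]; set g1a := derive1n 1 g a.
have g1_ge x : a <= x <= b -> 0 <= derive1n 1 g x - (g1a + 0 * (x + x)).
  move=> /andP[ax xb]; rewrite mul0r addr0 subr_ge0.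
  apply: (@le_is_derive_ge0 _ (derive1n 1 g) (derive1n 2 g) _ _ ax) => y /andP[? ?].
    by apply: cm_is_derive; lra.
  have y_gt0 : 0 < y by lra.
  by have [_] := g_cm 2 y_gt0; rewrite expr2 mulN1r opprK mul1r.
have gap_deriv x : a <= x <= b ->
    is_derive x 1 (fun d => g d - (0 + g1a * d + 0 * (d * d)))
                  (derive1n 1 g x - (g1a + 0 * (x + x))).
  move=> /andP[ax _]; apply: is_deriveB (cm_is_derive 0 _) (is_derive_quadratic 0 g1a 0 x).
  lra.
have := le_is_derive_ge0 ab gap_deriv g1_ge.
by rewrite !mul0r !add0r !addr0; lra.
Qed.

Definition hermite_coef (a b : R) : R :=
  (g b - g a - (b - a) * derive1n 1 g a) / (b - a) ^+ 2.

Lemma hermite_coef_ge0 (a b : R) : 0 < a <= b -> 0 <= hermite_coef a b.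
Proof.
by move=> ab; rewrite divr_ge0 ?sqr_ge0 //; have := cm_tangent_le ab; lra.
Qed.

Lemma cm_hermite_le (a b d : R) : 0 < a < b -> 0 < d <= b ->
  g a + derive1n 1 g a * (d - a) + hermite_coef a b * (d - a) ^+ 2 <= g d.
Proof.
move=> ab d_range.
set g1a := derive1n 1 g a; set K := hermite_coef a b.
(* the interpolant expanded in powers of [d] *)
set c1 := g1a - 2 * a * K; set c0 := g a - a * g1a + a ^+ 2 * K.
have G0_deriv (x : R) : 0 < x -> is_derive x 1 (fun d => g d - (c0 + c1 * d + K * (d * d)))
                                         (derive1n 1 g x - (c1 + K * (x + x))).
  by move=> x_gt0; apply: is_deriveB (cm_is_derive 0 x_gt0) (is_derive_quadratic c0 c1 K x).
have G1_deriv (x : R) : 0 < x -> is_derive x 1 (fun d => derive1n 1 g d - (c1 + K * (d + d)))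
                                         (derive1n 2 g x - (K + K)).
  move=> x_gt0; have := is_deriveB (cm_is_derive 1 x_gt0) (is_derive_quadratic c1 (K + K) 0 x).
  set q := (X in is_derive _ _ X _) => q_deriv.
  have -> : (fun d => derive1n 1 g d - (c1 + K * (d + d))) = q.
    by apply/funext => y; rewrite /q; congr (_ - _); ring.
  by rewrite mul0r addr0 in q_deriv.
have G2_deriv (x : R) : 0 < x -> is_derive x 1 (fun d => derive1n 2 g d - (K + K)) (derive1n 3 g x).
  move=> x_gt0; have := is_deriveB (cm_is_derive 2 x_gt0) (is_derive_cst (K + K) x 1).
  by rewrite subr0.
have G3_le0 (x : R) : 0 < x -> derive1n 3 g x <= 0.
  by move=> x_gt0; have [_] := g_cm 3 x_gt0; rewrite exprS expr2 !mulN1r opprK mulN1r oppr_ge0.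
have G0a : g a - (c0 + c1 * a + K * (a * a)) = 0 by rewrite /c0 /c1; ring.
have G1a : derive1n 1 g a - (c1 + K * (a + a)) = 0 by rewrite /c1 -/g1a; ring.
have G0b : g b - (c0 + c1 * b + K * (b * b)) = 0.
  have /andP[_ /gt_eqF ba] := ab.
  by rewrite /c0 /c1 /K /hermite_coef -/g1a; field; rewrite subr_eq0 ba.
have -> : g a + g1a * (d - a) + K * (d - a) ^+ 2 = c0 + c1 * d + K * (d * d).
  by rewrite /c0 /c1; ring.
rewrite -subr_ge0.
exact: (hermite_remainder_ge0 ab G0_deriv G1_deriv G2_deriv G3_le0 G0a G1a G0b d_range).
Qed.

End CompletelyMonotonic.

Lemma sumr_const_seq (R : realType) (T : Type) (s : seq T) (c : R) :
  \sum_(x <- s) c = (size s)%:R * c.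
Proof. by rewrite big_const_seq count_predT iter_addr_0 mulr_natl. Qed.

(* Each of [m] points has [m - 2] orthogonal neighbours, at squared distance
   [2 r], and one antipode, at squared distance [4 r]. *)
Definition cross_energy (R : realType) (g : R -> R) (m : nat) (r : R) : R :=
  m%:R * ((m%:R - 2) * g (2 * r) + g (4 * r)).

Section Energy.
Context {R : realType} (n : nat) (r : R).
Hypothesis r_gt0 : 0 < r.
Implicit Types (g : R -> R) (x y : 'M[R]_n) (C : seq 'M[R]_n).

Lemma energy_cross_polytope g C : uniq C ->
  (forall x, x \in C -> frob_dot x x = r) -> cross_polytope C ->
  energy g C = cross_energy g (size C) r.
Proof.
move=> C_uniq C_norm [C_oppr C_orth].
have oppr_neq x : x \in C -> (- x == x) = false.
  move=> xC; apply/eqP => xE; have := frob_dotNr x x.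
  rewrite xE C_norm // => rE.
  by have := addr_gt0 r_gt0 r_gt0; rewrite {2}rE subrr ltxx.
have antipode_count x : x \in C -> \sum_(y <- C) ((y == - x)%:R : R) = 1.
  move=> xC; rewrite (bigD1_seq (- x)) ?C_oppr //= eqxx big1 ?addr0 // => y.
  by move/negbTE ->.
have pair_value x y : x \in C -> y \in C -> y != x ->
    g (chordal_sq x y) = g (2 * r) + (y == - x)%:R * (g (4 * r) - g (2 * r)).
  move=> xC yC yx; rewrite chordal_sqE !C_norm //.
  have [->|y_nopp] := eqVneq y (- x).
    by rewrite frob_dotNr C_norm // mul1r [RHS]addrC subrK; congr g; ring.
  by rewrite C_orth // mul0r addr0; congr g; ring.
have row_sum x : x \in C -> \sum_(y <- C) (g (2 * r) + (y == - x)%:R * (g (4 * r) - g (2 * r)))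
    = (size C)%:R * g (2 * r) + (g (4 * r) - g (2 * r)).
  by move=> xC; rewrite big_split /= -mulr_suml antipode_count // sumr_const_seq mul1r.
have diag_value x : x \in C -> g (2 * r) + (x == - x)%:R * (g (4 * r) - g (2 * r)) = g (2 * r).
  by move=> xC; rewrite eq_sym oppr_neq // mul0r addr0.
have -> : energy g C = \sum_(x <- C) \sum_(y <- C | y != x)
    (g (2 * r) + (y == - x)%:R * (g (4 * r) - g (2 * r))).
  rewrite /energy big_seq [RHS]big_seq; apply: eq_bigr => x xC.
  rewrite big_seq_cond [RHS]big_seq_cond; apply: eq_bigr => y /andP[yC yx].
  exact: pair_value.
rewrite big_distinct_pairs // [X in X - _]big_seq (eq_bigr _ row_sum).
rewrite [X in _ - X]big_seq (eq_bigr _ diag_value) -!big_seq !sumr_const_seq.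
by rewrite /cross_energy; ring.
Qed.

Lemma cross_gram_sqr_sum_ge C : size C = (2 * n ^ 2)%N ->
  (forall x, x \in C -> frob_dot x x = r) ->
  2 * (size C)%:R * r ^+ 2 <= \sum_(x <- C) \sum_(y <- C) frob_dot x y ^+ 2.
Proof.
move=> C_size C_norm.
have : 0 <= \sum_(x <- C) \sum_(y <- C) frob_dot x y ^+ 2.
  by apply: sumr_ge0 => x _; apply: sumr_ge0 => y _; apply: sqr_ge0.
have := gram_sqr_sum_ge C; rewrite big_seq (eq_bigr _ C_norm) -big_seq sumr_const_seq.
move: (\sum_(x <- C) _); rewrite C_size natrM => T.
clear C_size C_norm; have := ler0n R (n ^ 2).
by rewrite le_eqVlt => /predU1P[<-|N_gt0]; nra.
Qed.

Let cross_nodes : 0 < 2 * r < 4 * r.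
Proof. by rewrite pmulr_rgt0 // r_gt0 ltr_pM2r // ltr_nat. Qed.

(* The Hermite interpolant of [g] at the nodes [2 r] (double) and [4 r],
   written in the inner product [t], the squared distance being [2 r - 2 t]. *)
Definition cross_interpolant g (t : R) : R :=
  g (2 * r) - 2 * derive1n 1 g (2 * r) * t + 4 * hermite_coef g (2 * r) (4 * r) * t ^+ 2.

Lemma cross_interpolant_le g x y : completely_monotonic g ->
  frob_dot x x = r -> frob_dot y y = r -> y != x ->
  cross_interpolant g (frob_dot x y) <= g (chordal_sq x y).
Proof.
move=> g_cm xx yy yx.
have chordal_range : 0 < chordal_sq x y <= 4 * r.
  by rewrite frob_dot_gt0 ?chordal_sq_le // subr_eq0 eq_sym.
have -> : cross_interpolant g (frob_dot x y) =
    g (2 * r) + derive1n 1 g (2 * r) * (chordal_sq x y - 2 * r)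
    + hermite_coef g (2 * r) (4 * r) * (chordal_sq x y - 2 * r) ^+ 2.
  by rewrite chordal_sqE xx yy /cross_interpolant; ring.
exact: cm_hermite_le cross_nodes chordal_range.
Qed.

Lemma cross_energy_le_energy g C : completely_monotonic g -> uniq C ->
  size C = (2 * n ^ 2)%N -> (forall x, x \in C -> frob_dot x x = r) ->
  cross_energy g (size C) r <= energy g C.
Proof.
move=> g_cm C_uniq C_size C_norm.
have T_ge := cross_gram_sqr_sum_ge C_size C_norm; clear C_size.
have S_ge0 := gram_sum_ge0 C.
set F := cross_interpolant g.
have pairs_le : \sum_(x <- C) \sum_(y <- C | y != x) F (frob_dot x y) <= energy g C.
  rewrite /energy big_seq [X in _ <= X]big_seq; apply: ler_sum => x xC.
  rewrite big_seq_cond [X in _ <= X]big_seq_cond; apply: ler_sum => y /andP[yC yx].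
  exact: cross_interpolant_le (C_norm x xC) (C_norm y yC) yx.
apply: le_trans pairs_le; rewrite big_distinct_pairs //.
set g1 := derive1n 1 g (2 * r); set K := hermite_coef g (2 * r) (4 * r).
have pairs_sumE : \sum_(x <- C) \sum_(y <- C) F (frob_dot x y) =
    (size C)%:R ^+ 2 * g (2 * r) - 2 * g1 * \sum_(x <- C) \sum_(y <- C) frob_dot x y
    + 4 * K * \sum_(x <- C) \sum_(y <- C) frob_dot x y ^+ 2.
  rewrite /F /cross_interpolant -/g1 -/K.
  under eq_bigr do rewrite big_split sumrB /= -!mulr_sumr sumr_const_seq.
  by rewrite big_split sumrB /= -!mulr_sumr sumr_const_seq; ring.
have diag_sumE : \sum_(x <- C) F (frob_dot x x) = (size C)%:R * F r.
  rewrite big_seq (eq_bigr _ (fun x xC => congr1 F (C_norm x xC))) -big_seq.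
  by rewrite sumr_const_seq.
have /andP[r2_gt0 r2_lt] := cross_nodes.
have g1_le0 : g1 <= 0 := cm_derive1_le0 g_cm r2_gt0.
have K_ge0 : 0 <= K by apply: (hermite_coef_ge0 g_cm); rewrite r2_gt0 ltW.
have g4E : g (4 * r) = g (2 * r) + 2 * r * g1 + 4 * r ^+ 2 * K.
  by rewrite /K /hermite_coef -/g1; field; rewrite subr_eq0 gt_eqF.
rewrite pairs_sumE diag_sumE /cross_energy g4E /F /cross_interpolant -/g1 -/K.
move: T_ge S_ge0; clear -r_gt0 g1_le0 K_ge0 => *; nra.
Qed.

End Energy.

Section Quaternions.
Context {R : realType}.

Definition quat := (R * R * R * R)%type.

Definition qmul (p q : quat) : quat :=
  let: (p0, p1, p2, p3) := p in let: (q0, q1, q2, q3) := q in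
  (p0 * q0 - p1 * q1 - p2 * q2 - p3 * q3, p0 * q1 + p1 * q0 + p2 * q3 - p3 * q2,
   p0 * q2 - p1 * q3 + p2 * q0 + p3 * q1, p0 * q3 + p1 * q2 - p2 * q1 + p3 * q0).

Definition qconj (p : quat) : quat :=
  let: (p0, p1, p2, p3) := p in (p0, - p1, - p2, - p3).

Definition qscale (k : R) (p : quat) : quat :=
  let: (p0, p1, p2, p3) := p in (k * p0, k * p1, k * p2, k * p3).

Definition qdot (p q : quat) : R :=
  let: (p0, p1, p2, p3) := p in let: (q0, q1, q2, q3) := q in
  p0 * q0 + p1 * q1 + p2 * q2 + p3 * q3.

Definition qcoord (j : nat) (p : quat) : R :=
  let: (p0, p1, p2, p3) := p in
  match j with 0 => p0 | 1 => p1 | 2 => p2 | _ => p3 end.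

Definition qbasis (a : nat) : quat :=
  match a with
  | 0 => (1, 0, 0, 0) | 1 => (0, 1, 0, 0) | 2 => (0, 0, 1, 0) | _ => (0, 0, 0, 1)
  end.

(* Row [i] holds the coordinates of [p e_i q]: in row-vector convention this
   is the matrix of the map [x |-> p x q]. *)
Definition lrmul_mx (p q : quat) : 'M[R]_4 :=
  \matrix_(i < 4, j < 4) qcoord j (qmul (qmul p (qbasis i)) q).

Lemma sum_ord4 (F : 'I_4 -> R) :
  \sum_(i < 4) F i = F 0 + F 1 + F 2 + F 3.
Proof.
rewrite !big_ord_recl big_ord0 addr0 !addrA.
by do !congr (_ + _); congr F; apply: val_inj.
Qed.

Ltac case_ord4 i := let lt_i := fresh in case: i => [[|[|[|[|?]]]] lt_i] //.
Ltac case_quat p :=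
  let p0 := fresh "p" in let p1 := fresh "p" in
  let p2 := fresh "p" in let p3 := fresh "p" in case: p => [[[p0 p1] p2] p3].

Lemma mul_lrmul_mx p q p' q' :
  lrmul_mx p q *m lrmul_mx p' q' = lrmul_mx (qmul p' p) (qmul q q').
Proof.
apply/matrixP => i j; rewrite !mxE sum_ord4 !mxE.
case_quat p; case_quat q; case_quat p'; case_quat q'.
by case_ord4 i; case_ord4 j; rewrite /=; ring.
Qed.

Lemma lrmul_mxZl k p q : lrmul_mx (qscale k p) q = k *: lrmul_mx p q.
Proof.
apply/matrixP => i j; rewrite !mxE.
by case_quat p; case_quat q; case_ord4 i; case_ord4 j; rewrite /=; ring.
Qed.

Lemma lrmul_mxZr k p q : lrmul_mx p (qscale k q) = k *: lrmul_mx p q.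
Proof.
apply/matrixP => i j; rewrite !mxE.
by case_quat p; case_quat q; case_ord4 i; case_ord4 j; rewrite /=; ring.
Qed.

Lemma trmx_lrmul_mx p q : (lrmul_mx p q)^T = lrmul_mx (qconj p) (qconj q).
Proof.
apply/matrixP => i j; rewrite !mxE.
by case_quat p; case_quat q; case_ord4 i; case_ord4 j; rewrite /=; ring.
Qed.

Lemma lrmul_mx1 : lrmul_mx (qbasis 0) (qbasis 0) = 1%:M.
Proof. by apply/matrixP => i j; rewrite !mxE; case_ord4 i; case_ord4 j; rewrite /=; ring. Qed.

Lemma frob_dot_lrmul_mx p q p' q' :
  frob_dot (lrmul_mx p q) (lrmul_mx p' q') = 4 * qdot p p' * qdot q q'.
Proof.
rewrite /frob_dot !sum_ord4 !mxE.
by case_quat p; case_quat q; case_quat p'; case_quat q'; rewrite /=; ring.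
Qed.

Lemma qmul_qconj p : qmul p (qconj p) = qscale (qdot p p) (qbasis 0).
Proof. by case_quat p; rewrite /=; congr (_, _, _, _); ring. Qed.

Lemma qmul_conjq p : qmul (qconj p) p = qscale (qdot p p) (qbasis 0).
Proof. by case_quat p; rewrite /=; congr (_, _, _, _); ring. Qed.

Lemma lrmul_mx_orthogonal p q : qdot p p = 1 -> qdot q q = 1 ->
  (lrmul_mx p q)^T *m lrmul_mx p q = 1%:M.
Proof.
move=> pp qq; rewrite trmx_lrmul_mx mul_lrmul_mx qmul_qconj qmul_conjq pp qq.
by rewrite lrmul_mxZl lrmul_mxZr !scale1r lrmul_mx1.
Qed.

(* [e_a e_b = (-1)^(qbasis_neg a b) e_(qbasis_idx a b)], the usual table
   [i j = k], [j k = i], [k i = j], [i^2 = j^2 = k^2 = -1]. *)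
Definition qbasis_idx (a b : nat) : nat :=
  (if a == 0 then b else if b == 0 then a else if a == b then 0 else 6 - a - b)%N.

Definition qbasis_neg (a b : nat) : bool := [&& a != 0, b != 0 & b != (a %% 3).+1]%N.

Ltac case_lt4 a := case: a => [|[|[|[|?]]]] //.

Lemma qbasisM a b : (a < 4)%N -> (b < 4)%N ->
  qmul (qbasis a) (qbasis b) = qscale ((-1) ^+ qbasis_neg a b) (qbasis (qbasis_idx a b)).
Proof. by case_lt4 a; case_lt4 b => _ _; rewrite /= ?expr0 ?expr1; congr (_, _, _, _); ring. Qed.

Lemma qbasis_idx_lt a b : (a < 4)%N -> (b < 4)%N -> (qbasis_idx a b < 4)%N.
Proof. by case_lt4 a; case_lt4 b. Qed.

Lemma qconj_qbasis a : (a < 4)%N -> qconj (qbasis a) = qscale ((-1) ^+ (a != 0)%N) (qbasis a).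
Proof. by case_lt4 a => _; rewrite /= ?expr0 ?expr1; congr (_, _, _, _); ring. Qed.

Lemma qdot_qbasis a b : (a < 4)%N -> (b < 4)%N -> qdot (qbasis a) (qbasis b) = (a == b)%:R.
Proof. by case_lt4 a; case_lt4 b => _ _; rewrite /=; ring. Qed.

(* [1 = 1^2] and [(1 + e)^2 = 2 e] for [e = i, j, k]. *)
Lemma qbasis_sqr a : (a < 4)%N -> exists p k, 0 < k /\ qmul p p = qscale k (qbasis a).
Proof.
case_lt4 a => _; [exists (1, 0, 0, 0), 1 | exists (1, 1, 0, 0), 2
  | exists (1, 0, 1, 0), 2 | exists (1, 0, 0, 1), 2];
  by split; rewrite ?ltr01 ?ltr0n //=; congr (_, _, _, _); ring.
Qed.

End Quaternions.

Section QuaternionCode.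
Context {R : realType}.

(* [qcode_mx (s, a, b)] is the map [x |-> (-1)^s e_a x e_b]; these 32 maps are
   the image of [Q8 x Q8] in [SO(4)]. *)
Definition qcode_mx (u : bool * nat * nat) : 'M[R]_4 :=
  let: (s, a, b) := u in (-1) ^+ s *: lrmul_mx (qbasis a) (qbasis b).

Definition qcode_index : seq (bool * nat * nat) :=
  [seq (sa, b) | sa <- [seq (s, a) | s <- [:: false; true], a <- iota 0 4], b <- iota 0 4].

Definition qcode : seq 'M[R]_4 := map qcode_mx qcode_index.

Lemma mem_qcode_index s a b : ((s, a, b) \in qcode_index) = (a < 4)%N && (b < 4)%N.
Proof. by case: s; case: a => [|[|[|[|a]]]]; case: b => [|[|[|[|b]]]]. Qed.

Lemma qcodeP x : x \in qcode ->
  exists s a b, [/\ (a < 4)%N, (b < 4)%N & x = qcode_mx (s, a, b)].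
Proof.
by case/mapP => [[[s a] b]]; rewrite mem_qcode_index => /andP[a4 b4] ->; exists s, a, b.
Qed.

Lemma mem_qcode s a b : (a < 4)%N -> (b < 4)%N -> qcode_mx (s, a, b) \in qcode.
Proof. by move=> a4 b4; apply: map_f; rewrite mem_qcode_index a4 b4. Qed.

Lemma size_qcode : size qcode = 32%N.
Proof. by rewrite size_map. Qed.

Lemma frob_dot_qcode_mx s a b t c d :
  (a < 4)%N -> (b < 4)%N -> (c < 4)%N -> (d < 4)%N ->
  frob_dot (qcode_mx (s, a, b)) (qcode_mx (t, c, d)) =
  (-1) ^+ (s (+) t) * 4 * (a == c)%:R * (b == d)%:R.
Proof.
by move=> *; rewrite frob_dotZ frob_dot_lrmul_mx !qdot_qbasis // signr_addb; ring.
Qed.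

Lemma oppr_qcode_mx s a b : - qcode_mx (s, a, b) = qcode_mx (~~ s, a, b).
Proof. by rewrite /= signrN scaleNr. Qed.

Lemma mul_qcode_mx s a b t c d :
  (a < 4)%N -> (b < 4)%N -> (c < 4)%N -> (d < 4)%N ->
  qcode_mx (s, a, b) *m qcode_mx (t, c, d) =
  qcode_mx (s (+) t (+) qbasis_neg c a (+) qbasis_neg b d, qbasis_idx c a, qbasis_idx b d).
Proof.
move=> a4 b4 c4 d4; rewrite /= -scalemxAl -scalemxAr scalerA mul_lrmul_mx !qbasisM //.
by rewrite lrmul_mxZl lrmul_mxZr !scalerA !signr_addb; congr (_ *: _); ring.
Qed.

Lemma trmx_qcode_mx s a b : (a < 4)%N -> (b < 4)%N ->
  (qcode_mx (s, a, b))^T = qcode_mx (s (+) (a != 0)%N (+) (b != 0)%N, a, b).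
Proof.
move=> a4 b4; rewrite /= [(_ *: _)^T]linearZ /= trmx_lrmul_mx !qconj_qbasis // lrmul_mxZl lrmul_mxZr.
by rewrite !scalerA !signr_addb; congr (_ *: _); ring.
Qed.

Lemma qcode_mx_orthogonal s a b : (a < 4)%N -> (b < 4)%N ->
  (qcode_mx (s, a, b))^T *m qcode_mx (s, a, b) = 1%:M.
Proof.
move=> a4 b4; rewrite /= [(_ *: _)^T]linearZ /= -scalemxAl -scalemxAr scalerA -expr2 sqrr_sign scale1r.
by rewrite lrmul_mx_orthogonal // qdot_qbasis // eqxx.
Qed.

Lemma det_qcode_mx s a b : (a < 4)%N -> (b < 4)%N -> \det (qcode_mx (s, a, b)) = 1.
Proof.
move=> a4 b4; rewrite /= detZ (exprM _ 2 2) sqrr_sign expr1n mul1r.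
have [p [k [k_gt0 ppE]]] := qbasis_sqr (R:=R) a4.
have [q [l [l_gt0 qqE]]] := qbasis_sqr (R:=R) b4.
apply: (orthogonal_det1_of_sqr (B := lrmul_mx p q) (c := k * l)).
- by have := qcode_mx_orthogonal false a4 b4; rewrite /= scale1r.
- by rewrite mulr_gt0.
- by rewrite mul_lrmul_mx ppE qqE lrmul_mxZl lrmul_mxZr scalerA.
Qed.

Lemma qcode_uniq : uniq qcode.
Proof.
rewrite map_inj_in_uniq // => [[[s a] b]] [[t c] d].
rewrite !mem_qcode_index => /andP[a4 b4] /andP[c4 d4] st_eq.
have := frob_dot_qcode_mx s t a4 b4 c4 d4.
rewrite -st_eq frob_dot_qcode_mx // !eqxx addbb expr0 !mulr1 mul1r.
have [<-|_] := eqVneq a c; last by rewrite mulr0 mul0r => /eqP; rewrite pnatr_eq0.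
have [<-|_] := eqVneq b d; last by rewrite mulr0 => /eqP; rewrite pnatr_eq0.
by clear st_eq; case: s; case: t => //= four_eq; exfalso; rewrite expr1 in four_eq; lra.
Qed.

Lemma qcode_SO U : U \in qcode -> in_SO U.
Proof.
by case/qcodeP => s [a [b [a4 b4 ->]]]; split; [exact: qcode_mx_orthogonal | exact: det_qcode_mx].
Qed.

Lemma qcode_subgroup : is_subgroup qcode.
Proof.
split; first by rewrite -(lrmul_mx1 (R:=R)) -[lrmul_mx _ _]scale1r (mem_qcode false).
split=> [x y|x xC].
  case/qcodeP => s [a [b [a4 b4 ->]]] /qcodeP [t [c [d [c4 d4 ->]]]].
  by rewrite mul_qcode_mx // mem_qcode // qbasis_idx_lt.
rewrite invmx_orthogonal; last by have [] := qcode_SO xC.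
by case/qcodeP: xC => s [a [b [a4 b4 ->]]]; rewrite trmx_qcode_mx // mem_qcode.
Qed.

Lemma qcode_cross_polytope : cross_polytope qcode.
Proof.
split=> [x|x y].
  by case/qcodeP => s [a [b [a4 b4 ->]]]; rewrite oppr_qcode_mx mem_qcode.
case/qcodeP => s [a [b [a4 b4 ->]]] /qcodeP [t [c [d [c4 d4 ->]]]] ts ts'.
rewrite frob_dot_qcode_mx //.
have [ac|] := eqVneq a c; last by rewrite mulr0 mul0r.
have [bd|] := eqVneq b d; last by rewrite mulr0.
subst c d; move: ts ts'; rewrite oppr_qcode_mx.
by case: s; case: t; rewrite ?eqxx.
Qed.

End QuaternionCode.

Theorem theorem8p2 (R : realType) :
  exists C : seq 'M[R]_4,
    is_code C /\ size C = 32%N /\ is_subgroup C /\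
    universally_optimal C /\ cross_polytope C.
Proof.
have qcode_norm (U : 'M[R]_4) : U \in qcode -> frob_dot U U = 4%:R by move/qcode_SO/frob_dot_SO.
have four_gt0 : 0 < 4%:R :> R by rewrite ltr0n.
exists qcode; split; first by split; [exact: qcode_uniq | exact: qcode_SO].
split; first exact: size_qcode.
split; first exact: qcode_subgroup.
split; last exact: qcode_cross_polytope.
move=> g g_cm C [C_uniq C_SO] C_size.
rewrite (energy_cross_polytope four_gt0 g qcode_uniq qcode_norm qcode_cross_polytope).
have C_size32 : size C = (2 * 4 ^ 2)%N by rewrite C_size size_qcode.
rewrite -C_size; apply: (cross_energy_le_energy four_gt0 g_cm C_uniq C_size32).
by move=> U /C_SO/frob_dot_SO.
Qed.
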